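(* Let $G=(V,E)$ be an $S$-regular graph with cells $V_1,\dots,V_k$, $n_i=|V_i|$, and let $B,C\subseteq V$, with $B_i=B\cap V_i$, $C_j=C\cap V_j$, $b_i=|B_i|/n_i$, $c_j=|C_j|/n_j$. Then \[\Bigl|\,|E(B,C)|-\sum_{i=1}^k\sum_{j=1}^k\sqrt{\tfrac{s_{ij}s_{ji}}{n_in_j}}\,|B_i||C_j|\,\Bigr|\le\lambda_B\sqrt{\sum_{i=1}^k\sum_{j=1}^k|B_i||C_j|(1-b_i)(1-c_j)}.\]
   Context: All graphs are simple, undirected and connected. $G$ is $S$-regular ($S=(s_{ij})$ a $k\times k$ nonnegative integer matrix) if $V$ is partitioned into nonempty cells $V_1,\dots,V_k$ such that every vertex of $V_i$ has exactly $s_{ij}$ neighbours in $V_j$. $|E(B,C)|$ denotes the number of pairs $(u,v)\in B\times C$ with $uv\in E$ (i.e. $\mathbf{1}_B^TA\mathbf{1}_C$, $A$ the adjacency matrix). The subspace $W=\mathrm{span}\{\mathbf{1}_{V_1},\dots,\mathbf{1}_{V_k}\}$ is $A$-invariant with eigenvalues on $W$ equal to those of $S$; the eigenvalues of $A$ on $W^\perp$ are the bulk eigenvalues (assume $|V|>k$), and $\lambda_B$ is the largest absolute value of a bulk eigenvalue. *)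

From HB Require Import structures.
From mathcomp Require Import all_boot all_order all_algebra.
From mathcomp Require Import reals.
Set Implicit Arguments. Unset Strict Implicit. Unset Printing Implicit Defensive.
Import Order.TTheory GRing.Theory Num.Theory.
Local Open Scope ring_scope.

Definition simple_graph (T : finType) (e : rel T) : Prop :=
  symmetric e /\ irreflexive e.

Definition connected_graph (T : finType) (e : rel T) : Prop :=
  forall x y : T, connect e x y.

Definition cellset (T : finType) (k : nat) (cell : T -> 'I_k) (i : 'I_k) : {set T} :=
  [set x | cell x == i].

Definition S_regular (T : finType) (e : rel T) (k : nat) (S : 'M[nat]_k)
    (cell : T -> 'I_k) : Prop :=
  (forall i : 'I_k, exists x : T, cell x = i) /\
  (forall (x : T) (j : 'I_k), #|[set y | e x y & cell y == j]| = S (cell x) j).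

Definition nEdges (T : finType) (e : rel T) (B C : {set T}) : nat :=
  #|[set p : T * T | [&& p.1 \in B, p.2 \in C & e p.1 p.2]]|.

Definition adj_apply (R : realType) (T : finType) (e : rel T) (v : T -> R) (x : T) : R :=
  \sum_(y | e x y) v y.

(* v lies in W^perp, W = span of the indicator vectors 1_{V_i} *)
Definition in_Wperp (R : realType) (T : finType) (k : nat) (cell : T -> 'I_k)
    (v : T -> R) : Prop :=
  forall i : 'I_k, \sum_(x in cellset cell i) v x = 0.

Definition bulk_eigenvalue (R : realType) (T : finType) (e : rel T) (k : nat)
    (cell : T -> 'I_k) (mu : R) : Prop :=
  exists v : T -> R, (exists x, v x != 0) /\ in_Wperp cell v /\
    (forall x, adj_apply e v x = mu * v x).

Definition is_lambdaB (R : realType) (T : finType) (e : rel T) (k : nat)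
    (cell : T -> 'I_k) (lam : R) : Prop :=
  (exists mu, bulk_eigenvalue e cell mu /\ `|mu| = lam) /\
  (forall mu, bulk_eigenvalue e cell mu -> `|mu| <= lam).

From HB Require Import structures.
From mathcomp Require Import all_boot all_order all_algebra.
From mathcomp Require Import reals complex ring.
Set Implicit Arguments. Unset Strict Implicit. Unset Printing Implicit Defensive.
Import Order.TTheory GRing.Theory Num.Theory.
Local Open Scope ring_scope.

(* The deflated adjacency matrix D x y = A x y - s_(c x)(c y) / n_(c y), where
   c x is the cell of x, is symmetric because n_i s_ij = n_j s_ji (double
   counting the edges between V_i and V_j).  It annihilates the cell space W
   and agrees with A on W^perp, so each of its nonzero eigenvalues is a bulk
   eigenvalue and its spectral radius is at most lambda_B.  Diagonalizing D in
   an orthonormal basis then gives (x D y)^2 <= lambda_B^2 |x|^2 |y|^2.  For x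
   and y the indicators of B and C minus their projections onto W, x D y is
   |E(B,C)| minus the main term (sqrt (s_ij s_ji / (n_i n_j)) = s_ij / n_j by
   the same balance identity) and |x|^2 = sum_i |B_i| (1 - b_i). *)

Section NormalmxForm.
Local Open Scope sesquilinear_scope.
Variable C : numClosedFieldType.
Local Notation "''[' u , v ]" := (dotmx u v) : ring_scope.
Local Notation "''[' u ]" := (dotmx u u) : ring_scope.

Lemma dotmx_mulmxl n (P : 'M[C]_n) (u v : 'rV[C]_n) : '[u *m P, v] = '[u, v *m P^t*].
Proof. by rewrite !dotmxE trmx_mul map_mxM trmxCK mulmxA. Qed.

Lemma dotmx_unitary n (P : 'M[C]_n) (u v : 'rV[C]_n) :
  P \is unitarymx -> '[u *m P, v *m P] = '[u, v].
Proof. by move=> Pu; rewrite dotmx_mulmxl -mulmxA (unitarymxP Pu) mulmx1. Qed.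

Lemma hermitian_eigenvalue_real n (A : 'M[C]_n) a :
  A \is hermsymmx -> eigenvalue A a -> a \is Num.real.
Proof.
move=> Ah /eigenvalueP [v vA v0].
have At : A^t* = A by have := is_hermitianmxP _ _ _ Ah; rewrite expr0 scale1r => <-.
have : '[v *m A, v] = '[v, v *m A] by rewrite dotmx_mulmxl At.
rewrite vA linearZl_LR linearZr_LR /= => /mulIf eq_a.
by apply/CrealP/esym/eq_a; rewrite dnorm_eq0.
Qed.

Lemma dotmx_diag_le n (d u : 'rV[C]_n) (lam : C) :
  (forall i, `|d 0 i| <= lam) -> '[u *m diag_mx d] <= lam ^+ 2 * '[u].
Proof.
move=> d_le; rewrite !dotmxE mul_mx_diag !mxE mulr_sumr; apply: ler_sum => j _.
rewrite !mxE -!normCK normrM exprMn mulrC ler_wpM2r ?exprn_ge0 ?normr_ge0 //.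
by rewrite !expr2 ler_pM ?normr_ge0.
Qed.

Lemma normalmx_spectral_diag_eigenvalue n (A : 'M[C]_n) i :
  A \is normalmx -> eigenvalue A (spectral_diag A 0 i).
Proof.
move=> /orthomx_spectralP; set P := spectralmx A => A_eq.
have Pu : P \is unitarymx by exact: spectral_unitarymx.
apply/eigenvalueP; exists (row i P).
  have PA : P *m A = diag_mx (spectral_diag A) *m P.
    by rewrite [in LHS]A_eq !mulmxA mulmxV ?mul1mx ?unitarymx_unit.
  by rewrite -row_mul PA row_mul row_diag_mx -scalemxAl -rowE.
apply/eqP => row0; have := row_unitarymxP Pu i i.
by rewrite row0 eqxx dotmxE mul0mx mxE => /eqP; rewrite eq_sym oner_eq0.
Qed.

Lemma normalmx_form_bound n (A : 'M[C]_n) (lam : C) (u v : 'rV[C]_n) :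
  A \is normalmx -> (forall a, eigenvalue A a -> `|a| <= lam) ->
  `|'[u *m A, v]| ^+ 2 <= lam ^+ 2 * '[u] * '[v].
Proof.
move=> An A_le; have /orthomx_spectralP := An.
set P := spectralmx A; set d := spectral_diag A => A_eq.
have Pu : P^t* \is unitarymx by rewrite trmxC_unitary spectral_unitarymx.
have d_le i : `|d 0 i| <= lam by apply/A_le/normalmx_spectral_diag_eigenvalue.
rewrite A_eq invmx_unitary ?spectral_unitarymx // !mulmxA dotmx_mulmxl.
rewrite -(dotmx_unitary u u Pu) -(dotmx_unitary v v Pu).
apply: le_trans (leif_le (CauchySchwarz (@dotmx _ n) _ _)) _.
by apply: ler_wpM2r; [exact: dnorm_ge0 | exact: dotmx_diag_le].
Qed.
End NormalmxForm.

Section RealSymmetric.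
Variable R : rcfType.
Local Notation toC := (real_complex R).

Lemma norm_real_complex (a : R) : `|toC a| = toC `|a|.
Proof. by rewrite normc_def /= expr0n /= addr0 sqrtr_sqr. Qed.

Lemma map_real_complex_realmx m p (X : 'M[R]_(m, p)) : map_mx toC X \is a realmx.
Proof. by apply/mxOverP => i j; rewrite mxE complex_real. Qed.

Lemma dotmx_real_complex n (u v : 'rV[R]_n) :
  dotmx (map_mx toC u) (map_mx toC v) = toC ((u *m v^T) 0 0).
Proof.
by rewrite dotmxE -map_trmx realmxC ?map_real_complex_realmx // map_trmx -map_mxM mxE.
Qed.

Lemma symmx_form_bound n (M : 'M[R]_n) (lam : R) (x y : 'rV[R]_n) :
  M^T = M -> (forall a, eigenvalue M a -> `|a| <= lam) ->
  ((x *m M *m y^T) 0 0) ^+ 2 <= lam ^+ 2 * (x *m x^T) 0 0 * (y *m y^T) 0 0.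
Proof.
move=> M_sym M_le.
have Mh : map_mx toC M \is hermsymmx.
  apply/realsym_hermsym; last exact: map_real_complex_realmx.
  by apply/is_hermitianmxP; rewrite expr0 scale1r map_mx_id // map_trmx M_sym.
have Mc_le a : eigenvalue (map_mx toC M) a -> `|a| <= toC lam.
  move=> Ma; have := hermitian_eigenvalue_real Mh Ma.
  case: a Ma => r b + /[!complex_real] /eqP b0; rewrite b0.
  change (eigenvalue (map_mx toC M) (toC r) -> `|toC r| <= toC lam).
  by rewrite eigenvalue_map norm_real_complex lecR => /M_le.
have := normalmx_form_bound (map_mx toC x) (map_mx toC y) (hermitian_normalmx Mh) Mc_le.
rewrite -map_mxM !dotmx_real_complex real_normK ?complex_real //.
by rewrite -!rmorphXn -!rmorphM lecR.
Qed.

Lemma sym_kernel_form_bound (T : finType) (K : T -> T -> R) (lam : R) (u w : T -> R) :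
  (forall x y, K x y = K y x) ->
  (forall a (g : T -> R), (exists x, g x != 0) ->
     (forall y, \sum_x g x * K x y = a * g y) -> `|a| <= lam) ->
  (\sum_x \sum_y u x * K x y * w y) ^+ 2
    <= lam ^+ 2 * (\sum_x u x ^+ 2) * (\sum_y w y ^+ 2).
Proof.
move=> K_sym K_le.
have sum_enum (F : T -> R) : \sum_x F x = \sum_(i < #|T|) F (enum_val i).
  exact: (big_enum_val (A := T)).
pose vec (h : T -> R) := \row_(i < #|T|) h (enum_val i).
pose M := \matrix_(i < #|T|, j < #|T|) K (enum_val i) (enum_val j).
have dot_vec h : (vec h *m (vec h)^T) 0 0 = \sum_x h x ^+ 2.
  by rewrite mxE sum_enum; apply: eq_bigr => i _; rewrite !mxE expr2.
have form_vec : (vec u *m M *m (vec w)^T) 0 0 = \sum_x \sum_y u x * K x y * w y.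
  rewrite sum_enum; under eq_bigr do rewrite sum_enum.
  rewrite exchange_big mxE; apply: eq_bigr => j _.
  by rewrite !mxE mulr_suml; apply: eq_bigr => i _; rewrite !mxE.
rewrite -form_vec -!dot_vec; apply: symmx_form_bound.
  by apply/matrixP => i j; rewrite !mxE K_sym.
move=> a /eigenvalueP [v vM /rV0Pn [j vj]].
apply: (K_le a (fun x => v 0 (enum_rank x))).
  by exists (enum_val j); rewrite enum_valK.
move=> y; have /rowP /(_ (enum_rank y)) := vM.
rewrite !mxE => <-; rewrite sum_enum; apply: eq_bigr => i _.
by rewrite !mxE enum_valK enum_rankK.
Qed.
End RealSymmetric.

Lemma ler_norm_mul_sqrt (R : rcfType) (q l z : R) :
  0 <= l -> q ^+ 2 <= l ^+ 2 * z -> `|q| <= l * Num.sqrt z.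
Proof.
move=> l_ge0 q_le; rewrite -sqrtr_sqr -(ger0_norm l_ge0) -sqrtr_sqr.
by rewrite -sqrtrM ?sqr_ge0 //; exact: ler_wsqrtr.
Qed.

Section SRegularGraph.
Variables (T : finType) (e : rel T) (k : nat) (S : 'M[nat]_k) (cell : T -> 'I_k).
Local Notation ncell i := #|cellset cell i|.

Lemma sum_indicator_cell (R : pzSemiRingType) (A : {set T}) (F : 'I_k -> R) :
  \sum_x (x \in A)%:R * F (cell x) = \sum_i #|A :&: cellset cell i|%:R * F i.
Proof.
rewrite (partition_big cell predT) //=; apply: eq_bigr => i _.
rewrite (eq_bigr (fun x => (x \in A)%:R * F i)) => [|x /eqP -> //].
rewrite -mulr_suml -sum1_card natr_sum; congr (_ * _).
rewrite big_mkcond [RHS]big_mkcond /=.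
by apply: eq_bigr => x _; rewrite /cellset !inE andbC; case: (x \in A); case: (cell x == i).
Qed.

Lemma nEdges_sum (R : pzSemiRingType) (B C : {set T}) :
  (nEdges e B C)%:R = \sum_x \sum_y (x \in B)%:R * (e x y)%:R * (y \in C)%:R :> R.
Proof.
rewrite /nEdges -sum1_card natr_sum pair_big big_mkcond /=.
apply: eq_bigr => -[x y] _; rewrite inE /=.
by case: (x \in B); case: (y \in C); case: (e x y); rewrite ?mul1r ?mulr1 ?mul0r ?mulr0.
Qed.

Lemma sum_cellset (V : nmodType) (F : T -> V) i :
  \sum_(x in cellset cell i) F x = \sum_(x | cell x == i) F x.
Proof. by apply: eq_bigl => x; rewrite inE. Qed.

Lemma in_Wperp_sum_cellfun (R : realType) (g : T -> R) (h : 'I_k -> R) :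
  in_Wperp cell g -> \sum_x g x * h (cell x) = 0.
Proof.
move=> g_perp; rewrite (partition_big cell predT) //=; apply: big1 => i _.
rewrite (eq_bigr (fun x => g x * h i)) => [|x /eqP -> //].
by rewrite -mulr_suml -sum_cellset g_perp mul0r.
Qed.

Hypothesis e_sym : symmetric e.
Hypothesis cell_surj : forall i, exists x, cell x = i.
Hypothesis S_nbrs : forall x j, #|[set y | e x y & cell y == j]| = S (cell x) j.

Lemma sum_adj_cell x j : (\sum_(y | cell y == j) e x y)%N = S (cell x) j.
Proof.
rewrite -S_nbrs -sum1_card big_mkcond [RHS]big_mkcond /=.
by apply: eq_bigr => y _; rewrite inE andbC; case: (cell y == j); case: (e x y).
Qed.

Lemma cell_edge_count i j : (ncell i * S i j)%N = (ncell j * S j i)%N.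
Proof.
have count_edges i' j' :
    (\sum_(x | cell x == i') \sum_(y | cell y == j') e x y)%N = (ncell i' * S i' j')%N.
  rewrite (eq_bigr (fun _ => S i' j')) => [|x /eqP <-]; last exact: sum_adj_cell.
  by rewrite sum_nat_const; congr (_ * _)%N; apply: eq_card => x; rewrite !inE.
rewrite -!count_edges exchange_big; apply: eq_bigr => y _; apply: eq_bigr => x _.
by rewrite e_sym.
Qed.

Lemma ncell_gt0 i : (0 < ncell i)%N.
Proof.
by have [x cx] := cell_surj i; apply/card_gt0P; exists x; rewrite inE cx.
Qed.

Section Deflated.
Variable R : numFieldType.

Definition deflated x y : R :=
  (e x y)%:R - (S (cell x) (cell y))%:R / (ncell (cell y))%:R.

Definition centered (A : {set T}) x : R :=
  (x \in A)%:R - #|A :&: cellset cell (cell x)|%:R / (ncell (cell x))%:R.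

Lemma ncell_neq0 i : (ncell i)%:R != 0 :> R.
Proof. by rewrite pnatr_eq0 -lt0n ncell_gt0. Qed.

Lemma deflated_sym x y : deflated x y = deflated y x.
Proof.
rewrite /deflated e_sym; congr (_ - _); apply/eqP.
by rewrite eqr_div ?ncell_neq0 // -!natrM mulnC cell_edge_count mulnC.
Qed.

Lemma sum_deflated_cell x j : \sum_(y | cell y == j) deflated x y = 0.
Proof.
rewrite sumrB -natr_sum sum_adj_cell.
rewrite (eq_bigr (fun _ => (S (cell x) j)%:R / (ncell j)%:R)) => [|y /eqP -> //].
rewrite sumr_const (eq_card (B := cellset cell j)) => [|y]; last by rewrite !inE.
by rewrite -[X in _ - X]mulr_natr divfK ?ncell_neq0 ?subrr.
Qed.

Lemma sum_deflated_cellfun x (h : 'I_k -> R) : \sum_y deflated x y * h (cell y) = 0.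
Proof.
rewrite (partition_big cell predT) //=; apply: big1 => j _.
rewrite (eq_bigr (fun y => deflated x y * h j)) => [|y /eqP -> //].
by rewrite -mulr_suml sum_deflated_cell mul0r.
Qed.

Lemma form_deflatedC (u w : T -> R) :
  \sum_x \sum_y u x * deflated x y * w y = \sum_x \sum_y w x * deflated x y * u y.
Proof.
rewrite exchange_big; apply: eq_bigr => y _; apply: eq_bigr => x _.
by rewrite [deflated x y]deflated_sym mulrC [u x * _]mulrC mulrA.
Qed.

Lemma form_deflated_cellfunr (u w : T -> R) (h : 'I_k -> R) :
  \sum_x \sum_y u x * deflated x y * (w y - h (cell y))
    = \sum_x \sum_y u x * deflated x y * w y.
Proof.
apply: eq_bigr => x _.
have h_null : u x * \sum_y deflated x y * h (cell y) = 0.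
  by rewrite sum_deflated_cellfun mulr0.
rewrite -[RHS]subr0 -[X in _ - X]h_null mulr_sumr -sumrB.
by apply: eq_bigr => y _; ring.
Qed.

Lemma form_deflated_cellfunl (u w : T -> R) (h : 'I_k -> R) :
  \sum_x \sum_y (u x - h (cell x)) * deflated x y * w y
    = \sum_x \sum_y u x * deflated x y * w y.
Proof. by rewrite form_deflatedC form_deflated_cellfunr form_deflatedC. Qed.

Lemma form_deflated_indicator (B C : {set T}) :
  \sum_x \sum_y (x \in B)%:R * deflated x y * (y \in C)%:R
    = (nEdges e B C)%:R - \sum_i \sum_j (S i j)%:R / (ncell j)%:R
                                       * #|B :&: cellset cell i|%:R * #|C :&: cellset cell j|%:R.
Proof.
pose s i j := (S i j)%:R / (ncell j)%:R : R.
rewrite nEdges_sum.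
have -> : \sum_x \sum_y (x \in B)%:R * deflated x y * (y \in C)%:R
    = \sum_x \sum_y (x \in B)%:R * (e x y)%:R * (y \in C)%:R
      - \sum_x (x \in B)%:R * \sum_y (y \in C)%:R * s (cell x) (cell y).
  rewrite -sumrB; apply: eq_bigr => x _; rewrite mulr_sumr -sumrB.
  by apply: eq_bigr => y _; rewrite /deflated /s; ring.
congr (_ - _); under eq_bigr do rewrite (sum_indicator_cell C (s (cell _))).
rewrite (sum_indicator_cell B (fun i => \sum_j _ * s i j)).
by apply: eq_bigr => i _; rewrite mulr_sumr; apply: eq_bigr => j _; rewrite /s; ring.
Qed.

Lemma form_deflated_centered (B C : {set T}) :
  \sum_x \sum_y centered B x * deflated x y * centered C y
    = (nEdges e B C)%:R - \sum_i \sum_j (S i j)%:R / (ncell j)%:R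
                                       * #|B :&: cellset cell i|%:R * #|C :&: cellset cell j|%:R.
Proof.
rewrite (form_deflated_cellfunl _ _ (fun i => #|B :&: cellset cell i|%:R / (ncell i)%:R)).
rewrite (form_deflated_cellfunr _ _ (fun j => #|C :&: cellset cell j|%:R / (ncell j)%:R)).
exact: form_deflated_indicator.
Qed.

Lemma sum_centered_sqr (A : {set T}) :
  \sum_x centered A x ^+ 2
    = \sum_i #|A :&: cellset cell i|%:R * (1 - #|A :&: cellset cell i|%:R / (ncell i)%:R).
Proof.
pose a i := #|A :&: cellset cell i|%:R / (ncell i)%:R : R.
have sqr_centered x :
    centered A x ^+ 2 = (x \in A)%:R * (1 - 2 * a (cell x)) + (x \in setT)%:R * a (cell x) ^+ 2.
  by rewrite /centered in_setT /a; case: (x \in A); rewrite /= ?mulr1n ?mulr0n; ring.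
rewrite (eq_bigr _ (fun x _ => sqr_centered x)) big_split /=.
rewrite (sum_indicator_cell A (fun i => 1 - 2 * a i)).
rewrite (sum_indicator_cell setT (fun i => a i ^+ 2)) -big_split /=.
apply: eq_bigr => i _; rewrite setTI /a.
by field; rewrite ncell_neq0.
Qed.

End Deflated.

Lemma deflated_eigenvalue_le (R : realType) (lam : R) :
  (forall mu, bulk_eigenvalue e cell mu -> `|mu| <= lam) -> 0 <= lam ->
  forall a (g : T -> R), (exists x, g x != 0) ->
  (forall y, \sum_x g x * deflated R x y = a * g y) -> `|a| <= lam.
Proof.
move=> lam_max lam_ge0 a g g_neq0 g_eig.
have [->|a_neq0] := eqVneq a 0; first by rewrite normr0.
have g_perp : in_Wperp cell g.
  move=> j; apply: (mulfI a_neq0); rewrite mulr0 mulr_sumr.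
  under eq_bigr do rewrite -g_eig.
  rewrite exchange_big; apply: big1 => x _; rewrite -mulr_sumr.
  by rewrite sum_cellset sum_deflated_cell mulr0.
apply: lam_max; exists g; split=> //; split=> // y.
rewrite -g_eig; under eq_bigr do rewrite /deflated mulrBr.
rewrite sumrB (in_Wperp_sum_cellfun (fun i => (S i (cell y))%:R / (ncell (cell y))%:R) g_perp).
rewrite subr0 /adj_apply big_mkcond; apply: eq_bigr => x _.
by rewrite e_sym; case: (e x y); rewrite ?mulr1 ?mulr0.
Qed.

Lemma sqrt_S_ratio (R : rcfType) i j :
  Num.sqrt ((S i j * S j i)%:R / (ncell i * ncell j)%:R) = (S i j)%:R / (ncell j)%:R :> R.
Proof.
have ratio_sqr : (S i j * S j i)%:R / (ncell i * ncell j)%:R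
    = ((S i j)%:R / (ncell j)%:R) ^+ 2 :> R.
  have Sji : (S j i)%:R = (ncell i)%:R * (S i j)%:R / (ncell j)%:R :> R.
    by rewrite -natrM cell_edge_count natrM; field; rewrite ncell_neq0.
  by rewrite !natrM Sji; field; rewrite !ncell_neq0.
by rewrite ratio_sqr sqrtr_sqr ger0_norm // divr_ge0 ?ler0n.
Qed.

End SRegularGraph.

Theorem mainTheorem11 (R : realType) (T : finType) (e : rel T) (k : nat)
    (S : 'M[nat]_k) (cell : T -> 'I_k) (lam : R) (B C : {set T}) :
  simple_graph e -> connected_graph e ->
  S_regular e S cell ->
  (k < #|T|)%N ->
  is_lambdaB e cell lam ->
  let n := fun i => #|cellset cell i| in
  let Bi := fun i => #|B :&: cellset cell i| in
  let Cj := fun j => #|C :&: cellset cell j| in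
  let b := fun i => (Bi i)%:R / (n i)%:R : R in
  let c := fun j => (Cj j)%:R / (n j)%:R : R in
  `| (nEdges e B C)%:R
     - \sum_(i < k) \sum_(j < k)
         Num.sqrt (((S i j) * (S j i))%:R / ((n i) * (n j))%:R) * (Bi i)%:R * (Cj j)%:R |
  <= lam * Num.sqrt (\sum_(i < k) \sum_(j < k)
                       (Bi i)%:R * (Cj j)%:R * (1 - b i) * (1 - c j)).
Proof.
move=> [e_sym _] _ [cell_surj S_nbrs] _ [[mu [_ <-]] mu_max] /=.
have := sym_kernel_form_bound (centered cell R B) (centered cell R C)
  (deflated_sym e_sym cell_surj S_nbrs R)
  (deflated_eigenvalue_le e_sym cell_surj S_nbrs mu_max (normr_ge0 mu)).
rewrite form_deflated_centered // !sum_centered_sqr // => form_le.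
apply: ler_norm_mul_sqrt (normr_ge0 mu) _.
under eq_bigr do under eq_bigr do rewrite (sqrt_S_ratio e_sym cell_surj S_nbrs).
under [X in _ <= _ * X]eq_bigr do under eq_bigr do rewrite -mulrA mulrACA.
by rewrite -big_distrlr mulrA; exact: form_le.
Qed.
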